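(* In the Setting below, for all $u,v,w,t\in V$: $$w\langle u,v\rangle+u\langle v,w\rangle+v\langle w,u\rangle=0,$$ $$\langle w,t\rangle\langle u,v\rangle+\langle u,t\rangle\langle v,w\rangle+\langle v,t\rangle\langle w,u\rangle=0,$$ where in the first identity elements of $U$ act on $V$ on the right, and in the second the products are taken in $U$.
   Context: Setting. Let $\mathbb F$ be a field of characteristic different from $2$ and $3$. A Malcev algebra is an anticommutative algebra $\mathcal M$ over $\mathbb F$ satisfying $(xz)(yt)=((xy)z)t+((yz)t)x+((zt)x)y+((tx)y)z$. Products are left-normed: $xyz=(xy)z$, $xyzt=((xy)z)t$. Put $J(x,y,z)=xyz+yzx+zxy$ (the Jacobian), $\{x,y,z\}=xyz-xzy+2x(yz)$, and $h(y,z,t,x,u)=\{yz,t,u\}x+\{yz,t,x\}u+\{yx,z,u\}t+\{yu,z,x\}t$. The variety $\mathcal H$ consists of the Malcev algebras satisfying $h(y,z,t,x,u)=0$ identically. The centroid $\Gamma(\mathcal M)$ is the set of linear maps $\alpha$ of $\mathcal M$ (written on the right) with $(xy)\alpha=x(y\alpha)=(x\alpha)y$ for all $x,y$. Put $p(x,y,z,t)=-\{zt,x,y\}-\{yt,z,x\}+\{xt,y,z\}$ and define the operator $\alpha(y,z,t)$ by $x\,\alpha(y,z,t)=p(x,y,z,t)$; for $\mathcal M\in\mathcal H$ these operators lie in $\Gamma(\mathcal M)$. Let $L=\mathfrak{sl}_2(\mathbb F)$ with basis $E,H,F$ and products $EH=E$, $FH=-F$, $EF=\tfrac12 H$. Standing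 assumption: $\mathcal M\in\mathcal H$ contains $L$ as a subalgebra and $mL\neq 0$ for every $0\neq m\in\mathcal M$. Define $N_{\mathcal M}=\{m\in\mathcal M: J(m,a,b)=0\ \forall a,b\in L\}$ and $J_{\mathcal M}=\{m\in\mathcal M:\{m,a,b\}=0\ \forall a,b\in L\}$. Known facts: $\mathcal M=N_{\mathcal M}\oplus J_{\mathcal M}$; $J_{\mathcal M}$ is a direct sum of $2$-dimensional $L$-submodules with bases $\{u,v\}$, $uH=u$, $vH=-v$, $uE=v$, $uF=0$, $vE=0$, $vF=-u$; letting $U$ be the linear span of the operators $\alpha(m,a,b)$ ($m\in\mathcal M$, $a,b\in L$), $U$ is a commutative associative subalgebra of $\Gamma(\mathcal M)$ and $N_{\mathcal M}=\sum_{\alpha\in U}L\alpha\cong L\otimes U$. Let $V=\{w\in J_{\mathcal M}: wH=w\}$, and for $w\in V$ put $w(1)=w$, $w(2)=wE$. There is a skew-symmetric bilinear map $\langle\cdot,\cdot\rangle:V\times V\to U$ with $u(1)v(1)=F\langle u,v\rangle$, $u(1)v(2)=u(2)v(1)=\tfrac12 H\langle u,v\rangle$, $u(2)v(2)=E\langle u,v\rangle$ for all $u,v\in V$. *)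

From HB Require Import structures.
From mathcomp Require Import all_boot all_order all_algebra.
Set Implicit Arguments. Unset Strict Implicit. Unset Printing Implicit Defensive.
Import GRing.Theory.
Local Open Scope ring_scope.

(* An algebra over F is an F-vector space M with a product mul : M -> M -> M
   (written xy in the paper; products are left-normed). *)
Section Malcev.
Variables (F : fieldType) (M : lmodType F) (mul : M -> M -> M).

Definition mul_bilinear : Prop :=
  (forall (a : F) (x y z : M), mul (a *: x + y) z = a *: mul x z + mul y z) /\
  (forall (a : F) (x y z : M), mul z (a *: x + y) = a *: mul z x + mul z y).

Definition anticommutative : Prop := forall x : M, mul x x = 0.

Definition malcev_identity : Prop :=
  forall x y z t : M,
    mul (mul x z) (mul y t) =
      mul (mul (mul x y) z) t + mul (mul (mul y z) t) x +
      mul (mul (mul z t) x) y + mul (mul (mul t x) y) z.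

Definition trip (x y z : M) : M :=
  mul (mul x y) z - mul (mul x z) y + 2%:R *: mul x (mul y z).

Definition hfun (y z t x u : M) : M :=
  mul (trip (mul y z) t u) x + mul (trip (mul y z) t x) u +
  mul (trip (mul y x) z u) t + mul (trip (mul y u) z x) t.

Definition malcevH : Prop :=
  [/\ mul_bilinear, anticommutative, malcev_identity &
      forall y z t x u : M, hfun y z t x u = 0].

Definition pfun (x y z t : M) : M :=
  - trip (mul z t) x y - trip (mul y t) z x + trip (mul x t) y z.

Definition alpha (y z t : M) : M -> M := fun x => pfun x y z t.

Variables (E H Fe : M).  (* Fe is the basis element F of sl_2 *)

Definition inL (a : M) : Prop :=
  exists c1 c2 c3 : F, a = c1 *: E + c2 *: H + c3 *: Fe.

Definition sl2_subalgebra : Prop :=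
  [/\ (forall c1 c2 c3 : F, c1 *: E + c2 *: H + c3 *: Fe = 0 ->
          [/\ c1 = 0, c2 = 0 & c3 = 0]),
      mul E H = E, mul Fe H = - Fe & mul E Fe = (2%:R)^-1 *: H].

Definition L_faithful : Prop :=
  forall m : M, m <> 0 -> exists a, inL a /\ mul m a <> 0.

Definition inJ (m : M) : Prop :=
  forall a b, inL a -> inL b -> trip m a b = 0.

Definition inV (w : M) : Prop := inJ w /\ mul w H = w.

Definition inU (f : M -> M) : Prop :=
  exists s : seq (F * M * M * M),
    (forall q, q \in s -> inL q.1.2 /\ inL q.2) /\
    (forall x, f x = \sum_(q <- s) q.1.1.1 *: alpha q.1.1.2 q.1.2 q.2 x).

Definition setting : Prop :=
  [/\ (2%:R : F) != 0, (3%:R : F) != 0, malcevH, sl2_subalgebra & L_faithful].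

(* br u v = <u,v> in U, an operator on M acting on the right: x<u,v> = br u v x.
   Skew-symmetric bilinear map V x V -> U with the stated product relations,
   where w(1) = w and w(2) = wE. *)
Definition bracket_ok (br : M -> M -> M -> M) : Prop :=
  [/\ (forall u v, inV u -> inV v -> inU (br u v)),
      (forall (a : F) u u' v, inV u -> inV u' -> inV v ->
         forall x, br (a *: u + u') v x = a *: br u v x + br u' v x),
      (forall (a : F) u v v', inV u -> inV v -> inV v' ->
         forall x, br u (a *: v + v') x = a *: br u v x + br u v' x),
      (forall u v, inV u -> inV v -> forall x, br u v x = - br v u x) &
      (forall u v, inV u -> inV v ->
         [/\ mul u v = br u v Fe,
             mul u (mul v E) = (2%:R)^-1 *: br u v H,
             mul (mul u E) v = (2%:R)^-1 *: br u v H &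
             mul (mul u E) (mul v E) = br u v E])].

End Malcev.

From HB Require Import structures.
From mathcomp Require Import all_boot all_order all_algebra.
Import GRing.Theory.
Local Open Scope ring_scope.
Set Implicit Arguments. Unset Strict Implicit. Unset Printing Implicit Defensive.

(* 1. The operators alpha(y,z,t) lie in the centroid of any algebra of the
      variety H.  This is an identity of the free algebra of H; it is checked
      by reflection: a normaliser for the free anticommutative algebra shows
      that twice the defect is an explicit integral combination of instances
      (and right multiples of instances) of the Malcev and h identities.
      Hence every element of U is a "centroidal" map: additive and
      commuting with all multiplications.
   2. For w in V the sl_2-module relations wF = 0 and (wE)F = -w follow from
      the J-relations of w and one instance of the Malcev identity.
   3. Using these, each term of the Malcev identity for (u, w, v, E) rewrites
      to a multiple of some a<b,c>; with skew-symmetry this is exactly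
      w<u,v> + u<v,w> + v<w,u> = 0.
   4. A centroidal map vanishing on F vanishes on L, hence (faithfulness of L)
      everywhere.  The operator <u,v><w,t> + <v,w><u,t> + <w,u><v,t> is
      centroidal and sends F to the first identity multiplied by t, so it is
      zero; this is the second identity. *)

Section BilinearProduct.
Variables (F : fieldType) (M : lmodType F) (mul : M -> M -> M).
Hypotheses (hbil : mul_bilinear mul) (hanti : anticommutative mul).

Lemma prodDl x y z : mul (x + y) z = mul x z + mul y z.
Proof. by have := hbil.1 1 x y z; rewrite !scale1r. Qed.

Lemma prodDr x y z : mul z (x + y) = mul z x + mul z y.
Proof. by have := hbil.2 1 x y z; rewrite !scale1r. Qed.

Lemma prod0l z : mul 0 z = 0.
Proof. by apply: (addrI (mul 0 z)); rewrite -prodDl !addr0. Qed.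

Lemma prod0r z : mul z 0 = 0.
Proof. by apply: (addrI (mul z 0)); rewrite -prodDr !addr0. Qed.

Lemma prodZl a x z : mul (a *: x) z = a *: mul x z.
Proof. by have := hbil.1 a x 0 z; rewrite !addr0 prod0l addr0. Qed.

Lemma prodZr a x z : mul z (a *: x) = a *: mul z x.
Proof. by have := hbil.2 a x 0 z; rewrite !addr0 prod0r addr0. Qed.

Lemma prodNl x z : mul (- x) z = - mul x z.
Proof. by rewrite -scaleN1r prodZl scaleN1r. Qed.

Lemma prodzl x z (c : int) : mul (x *~ c) z = mul x z *~ c.
Proof. by rewrite -!scaler_int prodZl. Qed.

Lemma prodzr x z (c : int) : mul z (x *~ c) = mul z x *~ c.
Proof. by rewrite -!scaler_int prodZr. Qed.

Lemma prod_skew x y : mul x y = - mul y x.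
Proof.
apply/eqP; rewrite -addr_eq0; apply/eqP.
by have := hanti (x + y); rewrite prodDl !prodDr !hanti add0r addr0.
Qed.

End BilinearProduct.

Inductive term :=
  | tvar of nat | tmul of term & term | tadd of term & term | topp of term
  | tscale of int & term | tzero.

Inductive mono := mvar of nat | mmul of mono & mono.

Definition ncmp (i j : nat) : comparison :=
  if i == j then Eq else if (i < j)%N then Lt else Gt.

Lemma ncmp_eq i j : ncmp i j = Eq -> i = j.
Proof. by rewrite /ncmp; case: eqP => // _; case: ifP. Qed.

(* A total order on monomials, used to choose the representative of each
   pair {ab, ba} = {ab, -ab} in the free anticommutative algebra. *)
Fixpoint mcmp (a b : mono) : comparison :=
  match a, b with
  | mvar i, mvar j => ncmp i j
  | mvar _, mmul _ _ => Lt
  | mmul _ _, mvar _ => Gt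
  | mmul a1 a2, mmul b1 b2 =>
      if mcmp a1 b1 is Eq then mcmp a2 b2 else mcmp a1 b1
  end.

Lemma mcmp_eq a b : mcmp a b = Eq -> a = b.
Proof.
elim: a b => [i|a1 IH1 a2 IH2] [j|b1 b2] //=; first by move/ncmp_eq ->.
by case E1: (mcmp a1 b1) => // /IH2 ->; rewrite (IH1 _ E1).
Qed.

Definition lincomb := seq (int * mono).

Definition mul_mono (a b : mono) : lincomb :=
  match mcmp a b with
  | Eq => [::]
  | Lt => [:: (1%:Z, mmul a b)]
  | Gt => [:: (-1, mmul b a)]
  end.

Definition scale_lc (c : int) (p : lincomb) : lincomb :=
  [seq (c * q.1, q.2) | q <- p].

Definition mul_lc (p q : lincomb) : lincomb :=
  flatten [seq flatten [seq scale_lc (a.1 * b.1) (mul_mono a.2 b.2) | b <- q]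
          | a <- p].

Fixpoint nf (t : term) : lincomb :=
  match t with
  | tvar n => [:: (1%:Z, mvar n)]
  | tmul a b => mul_lc (nf a) (nf b)
  | tadd a b => nf a ++ nf b
  | topp a => scale_lc (-1) (nf a)
  | tscale z a => scale_lc z (nf a)
  | tzero => [::]
  end.

Fixpoint insert_lc (q : int * mono) (p : lincomb) : lincomb :=
  match p with
  | [::] => [:: q]
  | r :: p' =>
      if mcmp q.2 r.2 is Eq then (q.1 + r.1, r.2) :: p' else r :: insert_lc q p'
  end.

Definition collect (p : lincomb) : lincomb := foldr insert_lc [::] p.

Definition iszero (t : term) : bool := all (fun q => q.1 == 0) (collect (nf t)).

(* Instances of the defining identities of the variety H, and their right
   multiples; by anticommutativity these span the ideal of consequences. *)
Definition trip_tm x y z :=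
  tadd (tadd (tmul (tmul x y) z) (topp (tmul (tmul x z) y)))
       (tscale 2 (tmul x (tmul y z))).

Definition pfun_tm x y z t :=
  tadd (tadd (topp (trip_tm (tmul z t) x y)) (topp (trip_tm (tmul y t) z x)))
       (trip_tm (tmul x t) y z).

Definition malcev_tm x y z t :=
  tadd (tmul (tmul x z) (tmul y t))
       (topp (tadd (tadd (tadd (tmul (tmul (tmul x y) z) t)
                               (tmul (tmul (tmul y z) t) x))
                         (tmul (tmul (tmul z t) x) y))
                   (tmul (tmul (tmul t x) y) z))).

Definition hfun_tm y z t x u :=
  tadd (tadd (tadd (tmul (trip_tm (tmul y z) t u) x) (tmul (trip_tm (tmul y z) t x) u))
             (tmul (trip_tm (tmul y x) z u) t))
       (tmul (trip_tm (tmul y u) z x) t).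

Inductive relator :=
  | rMalcev of term & term & term & term
  | rH of term & term & term & term & term
  | rMulR of relator & term.

Fixpoint relator_tm (r : relator) : term :=
  match r with
  | rMalcev a b c d => malcev_tm a b c d
  | rH a b c d e => hfun_tm a b c d e
  | rMulR r t => tmul (relator_tm r) t
  end.

Definition combination (c : seq (int * relator)) : term :=
  foldr (fun q acc => tadd (tscale q.1 (relator_tm q.2)) acc) tzero c.

Definition certifies (N : nat) (T : term) (c : seq (int * relator)) : bool :=
  iszero (tadd (tscale (Posz N) T) (topp (combination c))).

Section Soundness.
Variables (F : fieldType) (M : lmodType F) (mul : M -> M -> M).
Hypotheses (hbil : mul_bilinear mul) (hanti : anticommutative mul).
Variable env : seq M.

Fixpoint eval (t : term) : M :=
  match t with
  | tvar n => nth 0 env n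
  | tmul a b => mul (eval a) (eval b)
  | tadd a b => eval a + eval b
  | topp a => - eval a
  | tscale z a => eval a *~ z
  | tzero => 0
  end.

Fixpoint eval_mono (m : mono) : M :=
  match m with mvar n => nth 0 env n | mmul a b => mul (eval_mono a) (eval_mono b) end.

Definition eval_lc (p : lincomb) : M := \sum_(q <- p) eval_mono q.2 *~ q.1.

Lemma eval_lc_cat p q : eval_lc (p ++ q) = eval_lc p + eval_lc q.
Proof. by rewrite /eval_lc big_cat. Qed.

Lemma eval_lc_cons q p : eval_lc (q :: p) = eval_mono q.2 *~ q.1 + eval_lc p.
Proof. by rewrite /eval_lc big_cons. Qed.

Lemma eval_lc_scale c p : eval_lc (scale_lc c p) = eval_lc p *~ c.
Proof.
rewrite /eval_lc big_map; elim: p => [|q p IH]; first by rewrite !big_nil mul0rz.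
by rewrite !big_cons IH mulrzDl -mulrzA mulrC.
Qed.

Lemma eval_mul_mono a b : eval_lc (mul_mono a b) = mul (eval_mono a) (eval_mono b).
Proof.
rewrite /mul_mono; case E: (mcmp a b); rewrite /eval_lc ?big_cons big_nil /= ?addr0.
- by rewrite (mcmp_eq E) hanti.
- by rewrite mulr1z.
- by rewrite (prod_skew hbil hanti) mulrN1z opprK.
Qed.

Lemma eval_mul_lc p q : eval_lc (mul_lc p q) = mul (eval_lc p) (eval_lc q).
Proof.
elim: p => [|a p IH]; first by rewrite /eval_lc big_nil prod0l.
rewrite [mul_lc _ _]/= eval_lc_cat IH eval_lc_cons prodDl //; congr (_ + _); clear IH.
elim: q => [|b q IHq]; first by rewrite /eval_lc big_nil prod0r.
rewrite [flatten _]/= eval_lc_cat IHq eval_lc_cons prodDr //; congr (_ + _).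
by rewrite eval_lc_scale eval_mul_mono prodzr // prodzl // -!mulrzA mulrC.
Qed.

Lemma eval_nf t : eval_lc (nf t) = eval t.
Proof.
elim: t => [n|a IHa b IHb|a IHa b IHb|a IHa|z a IHa|] /=.
- by rewrite eval_lc_cons /eval_lc big_nil addr0.
- by rewrite eval_mul_lc IHa IHb.
- by rewrite eval_lc_cat IHa IHb.
- by rewrite eval_lc_scale IHa mulrN1z.
- by rewrite eval_lc_scale IHa.
- by rewrite /eval_lc big_nil.
Qed.

Lemma eval_insert q p : eval_lc (insert_lc q p) = eval_mono q.2 *~ q.1 + eval_lc p.
Proof.
elim: p => [|r p IH] /=; first by rewrite eval_lc_cons.
case E: (mcmp q.2 r.2); rewrite !eval_lc_cons ?IH.
- by rewrite /= (mcmp_eq E) mulrzDr addrA.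
- by rewrite addrCA.
- by rewrite addrCA.
Qed.

Lemma eval_collect p : eval_lc (collect p) = eval_lc p.
Proof. by elim: p => [|q p IH] //=; rewrite eval_insert IH eval_lc_cons. Qed.

Lemma iszeroP t : iszero t -> eval t = 0.
Proof.
rewrite /iszero -eval_nf -eval_collect /eval_lc.
elim: (collect _) => [|q p IH] /=; first by rewrite big_nil.
by case/andP => /eqP q0 /IH; rewrite big_cons q0 mulr0z add0r.
Qed.

Hypotheses (hmal : malcev_identity mul) (hh : forall y z t x u, hfun mul y z t x u = 0).

Lemma eval_relator r : eval (relator_tm r) = 0.
Proof.
elim: r => [a b c d|a b c d e|r IH t] /=.
- by rewrite hmal subrr.
- have := hh (eval a) (eval b) (eval c) (eval d) (eval e).
  by rewrite /hfun /trip !scaler_nat !pmulrn.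
- by rewrite IH prod0l.
Qed.

Lemma certifiesP N T c : certifies N T c -> eval T *+ N = 0.
Proof.
move/iszeroP => /=; have -> : eval (combination c) = 0.
  by elim: c => [|q c IH] //=; rewrite IH eval_relator mul0rz addr0.
by rewrite oppr0 addr0 -pmulrn.
Qed.

End Soundness.

(* p(xs,y,z,t) - x p(s,y,z,t), the failure of alpha(y,z,t) to commute with
   left multiplication by x; twice it is the following combination of
   relators. *)
Definition centroid_defect : term :=
  tadd (pfun_tm (tmul (tvar 0) (tvar 1)) (tvar 2) (tvar 3) (tvar 4))
       (topp (tmul (tvar 0) (pfun_tm (tvar 1) (tvar 2) (tvar 3) (tvar 4)))).

Definition centroid_certificate : seq (int * relator) := ([::
  (-2, rMalcev (tmul (tvar 0) (tvar 1)) (tvar 2) (tvar 4) (tvar 3));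
  (-5, rMalcev (tmul (tvar 0) (tvar 1)) (tvar 3) (tvar 4) (tvar 2));
  (-2, rMalcev (tmul (tvar 2) (tvar 3)) (tvar 0) (tvar 4) (tvar 1));
  (2, rMalcev (tmul (tvar 2) (tvar 4)) (tvar 0) (tvar 3) (tvar 1));
  (-1, rMalcev (tmul (tvar 0) (tvar 3)) (tvar 1) (tvar 2) (tvar 4));
  (2, rMalcev (tmul (tvar 1) (tvar 4)) (tvar 2) (tvar 0) (tvar 3));
  (-1, rMalcev (tmul (tvar 1) (tvar 2)) (tvar 0) (tvar 3) (tvar 4));
  (-4, rH (tvar 0) (tvar 1) (tvar 4) (tvar 2) (tvar 3));
  (-2, rMalcev (tmul (tvar 0) (tvar 1)) (tvar 3) (tvar 2) (tvar 4));
  (-1, rMalcev (tmul (tvar 1) (tvar 3)) (tvar 4) (tvar 0) (tvar 2));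
  (-1, rMalcev (tmul (tvar 0) (tvar 2)) (tvar 4) (tvar 1) (tvar 3));
  (-2, rMalcev (tmul (tvar 0) (tvar 2)) (tvar 1) (tvar 4) (tvar 3));
  (-1, rMalcev (tmul (tvar 3) (tvar 4)) (tvar 0) (tvar 1) (tvar 2));
  (-1, rMalcev (tmul (tvar 0) (tvar 2)) (tvar 3) (tvar 4) (tvar 1));
  (-3, rMalcev (tmul (tvar 0) (tvar 2)) (tvar 1) (tvar 3) (tvar 4));
  (1, rMalcev (tmul (tvar 1) (tvar 4)) (tvar 3) (tvar 0) (tvar 2));
  (2, rMalcev (tmul (tvar 2) (tvar 4)) (tvar 1) (tvar 0) (tvar 3));
  (-2, rH (tvar 0) (tvar 1) (tvar 3) (tvar 2) (tvar 4));
  (-1, rMalcev (tmul (tvar 1) (tvar 4)) (tvar 0) (tvar 2) (tvar 3));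
  (1, rMalcev (tmul (tvar 1) (tvar 2)) (tvar 3) (tvar 4) (tvar 0));
  (-2, rH (tvar 0) (tvar 2) (tvar 3) (tvar 1) (tvar 4));
  (2, rH (tvar 1) (tvar 2) (tvar 3) (tvar 0) (tvar 4));
  (-1, rMalcev (tmul (tvar 1) (tvar 2)) (tvar 4) (tvar 0) (tvar 3));
  (2, rMalcev (tmul (tvar 1) (tvar 2)) (tvar 3) (tvar 0) (tvar 4));
  (-1, rMalcev (tmul (tvar 0) (tvar 3)) (tvar 4) (tvar 1) (tvar 2));
  (1, rMalcev (tmul (tvar 0) (tvar 4)) (tvar 3) (tvar 1) (tvar 2));
  (-2, rMulR (rMalcev (tvar 0) (tvar 1) (tvar 4) (tvar 3)) (tvar 2));
  (2, rMulR (rMalcev (tvar 0) (tvar 1) (tvar 3) (tvar 4)) (tvar 2));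
  (3, rMalcev (tmul (tvar 3) (tvar 4)) (tvar 1) (tvar 2) (tvar 0));
  (-2, rMalcev (tmul (tvar 0) (tvar 3)) (tvar 1) (tvar 4) (tvar 2));
  (1, rMalcev (tmul (tvar 2) (tvar 4)) (tvar 1) (tvar 3) (tvar 0));
  (1, rMalcev (tmul (tvar 1) (tvar 4)) (tvar 2) (tvar 3) (tvar 0));
  (-1, rMalcev (tmul (tvar 2) (tvar 3)) (tvar 0) (tvar 1) (tvar 4));
  (-1, rMalcev (tmul (tvar 0) (tvar 4)) (tvar 2) (tvar 3) (tvar 1));
  (1, rMalcev (tmul (tvar 2) (tvar 3)) (tvar 1) (tvar 4) (tvar 0));
  (1, rMalcev (tmul (tvar 1) (tvar 3)) (tvar 2) (tvar 4) (tvar 0));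
  (1, rMalcev (tmul (tvar 2) (tvar 4)) (tvar 0) (tvar 1) (tvar 3));
  (1, rMalcev (tmul (tvar 0) (tvar 3)) (tvar 2) (tvar 4) (tvar 1));
  (2, rH (tvar 0) (tvar 3) (tvar 1) (tvar 2) (tvar 4));
  (-2, rH (tvar 0) (tvar 1) (tvar 2) (tvar 3) (tvar 4));
  (-5, rMalcev (tmul (tvar 0) (tvar 1)) (tvar 2) (tvar 3) (tvar 4));
  (-5, rMalcev (tmul (tvar 0) (tvar 1)) (tvar 4) (tvar 2) (tvar 3));
  (-2, rH (tvar 1) (tvar 3) (tvar 0) (tvar 2) (tvar 4));
  (-2, rMalcev (tmul (tvar 1) (tvar 3)) (tvar 0) (tvar 4) (tvar 2));
  (-2, rMulR (rMalcev (tvar 0) (tvar 3) (tvar 2) (tvar 4)) (tvar 1));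
  (-1, rMalcev (tmul (tvar 3) (tvar 4)) (tvar 2) (tvar 0) (tvar 1));
  (-1, rMalcev (tmul (tvar 2) (tvar 3)) (tvar 4) (tvar 0) (tvar 1));
  (1, rMalcev (tmul (tvar 2) (tvar 4)) (tvar 3) (tvar 0) (tvar 1));
  (-2, rH (tvar 2) (tvar 3) (tvar 0) (tvar 1) (tvar 4));
  (-1, rMalcev (tmul (tvar 0) (tvar 4)) (tvar 1) (tvar 2) (tvar 3));
  (-1, rMalcev (tmul (tvar 1) (tvar 3)) (tvar 0) (tvar 2) (tvar 4));
  (-2, rMulR (rMalcev (tvar 1) (tvar 2) (tvar 3) (tvar 4)) (tvar 0));
  (-2, rMulR (rMalcev (tvar 1) (tvar 3) (tvar 4) (tvar 2)) (tvar 0));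
  (-2, rMulR (rMalcev (tvar 1) (tvar 4) (tvar 2) (tvar 3)) (tvar 0));
  (-2, rMulR (rMalcev (tvar 1) (tvar 3) (tvar 2) (tvar 4)) (tvar 0))]
  )%Z.

Lemma centroid_certified : certifies 2 centroid_defect centroid_certificate.
Proof. by vm_compute. Qed.

Definition additivity_defect : term :=
  tadd (pfun_tm (tadd (tvar 0) (tvar 1)) (tvar 2) (tvar 3) (tvar 4))
       (topp (tadd (pfun_tm (tvar 0) (tvar 2) (tvar 3) (tvar 4))
                   (pfun_tm (tvar 1) (tvar 2) (tvar 3) (tvar 4)))).

Lemma additivity_certified : certifies 1 additivity_defect [::].
Proof. by vm_compute. Qed.

Section CentroidalMaps.
Variables (F : fieldType) (M : lmodType F) (mul : M -> M -> M).
Hypotheses (hbil : mul_bilinear mul) (hanti : anticommutative mul).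

Definition centroidal (f : M -> M) : Prop :=
  {morph f : x y / x + y} /\ forall x s, f (mul x s) = mul x (f s).

Variable f : M -> M.
Hypothesis hf : centroidal f.

Lemma centroidal0 : f 0 = 0.
Proof. by apply: (addrI (f 0)); rewrite -hf.1 !addr0. Qed.

Lemma centroidalN x : f (- x) = - f x.
Proof. by apply: (addrI (f x)); rewrite -hf.1 !subrr centroidal0. Qed.

Lemma centroidal_mulr x s : f (mul x s) = mul (f x) s.
Proof. by rewrite (prod_skew hbil hanti) centroidalN hf.2 -(prod_skew hbil hanti). Qed.

Lemma centroidal_natmul x n : f (x *+ n) = f x *+ n.
Proof. by elim: n => [|n IH]; rewrite ?centroidal0 // !mulrS hf.1 IH. Qed.

Lemma centroidal_scale_inv n x : (n%:R : F) != 0 ->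
  f ((n%:R)^-1 *: x) = (n%:R)^-1 *: f x.
Proof.
move=> hn; have cancel_n (v : M) : ((n%:R)^-1 *: v) *+ n = v.
  by rewrite -scaler_nat scalerA mulfV // scale1r.
by rewrite -{2}(cancel_n x) centroidal_natmul -scaler_nat scalerA mulVf // scale1r.
Qed.

End CentroidalMaps.

Lemma centroidal_comp (F : fieldType) (M : lmodType F) (mul : M -> M -> M) f g :
  centroidal mul f -> centroidal mul g -> centroidal mul (fun x => f (g x)).
Proof.
by move=> hf hg; split=> [x y|x s]; [rewrite hg.1 hf.1 | rewrite hg.2 hf.2].
Qed.

Lemma centroidal_add (F : fieldType) (M : lmodType F) (mul : M -> M -> M) f g :
  mul_bilinear mul -> centroidal mul f -> centroidal mul g ->
  centroidal mul (fun x => f x + g x).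
Proof.
move=> hbil hf hg; split=> [x y|x s]; first by rewrite hf.1 hg.1 addrACA.
by rewrite hf.2 hg.2 prodDr.
Qed.

Section AlphaCentroidal.
Variables (F : fieldType) (M : lmodType F) (mul : M -> M -> M).
Hypotheses (hH : malcevH mul) (h2 : (2%:R : F) != 0).

Lemma alpha_additive y z t : {morph alpha mul y z t : x x' / x + x'}.
Proof.
case: hH => hbil hanti hmal hh x x'.
have := certifiesP hbil hanti [:: x; x'; y; z; t] hmal hh additivity_certified.
have -> : eval mul [:: x; x'; y; z; t] additivity_defect =
    alpha mul y z t (x + x') - (alpha mul y z t x + alpha mul y z t x').
  by rewrite /alpha /pfun /trip /= !scaler_nat !pmulrn.
by rewrite mulr1n => /eqP; rewrite subr_eq0 => /eqP.
Qed.

Lemma alpha_mull y z t x s : alpha mul y z t (mul x s) = mul x (alpha mul y z t s).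
Proof.
case: hH => hbil hanti hmal hh.
have := certifiesP hbil hanti [:: x; s; y; z; t] hmal hh centroid_certified.
have -> : eval mul [:: x; s; y; z; t] centroid_defect =
    alpha mul y z t (mul x s) - mul x (alpha mul y z t s).
  by rewrite /alpha /pfun /trip /= !scaler_nat !pmulrn.
rewrite -scaler_nat => /eqP; rewrite scaler_eq0 (negbTE h2) /=.
by rewrite subr_eq0 => /eqP.
Qed.

Lemma inU_centroidal (E H Fe : M) f : inU mul E H Fe f -> centroidal mul f.
Proof.
case: hH => hbil _ _ _; case=> s [_ hs]; split=> [x y|x y]; rewrite !hs.
  by rewrite -big_split; apply: eq_bigr => q _; rewrite alpha_additive scalerDr.
rewrite (big_morph (mul x) (fun a b => prodDr hbil a b x) (prod0r hbil x)).
by apply: eq_bigr => q _; rewrite alpha_mull prodZr.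
Qed.

End AlphaCentroidal.

Section SL2Module.
Variables (F : fieldType) (M : lmodType F) (mul : M -> M -> M) (E H Fe : M).
Hypotheses (h2 : (2%:R : F) != 0) (h3 : (3%:R : F) != 0).
Hypotheses (hbil : mul_bilinear mul) (hanti : anticommutative mul)
           (hmal : malcev_identity mul) (hsl2 : sl2_subalgebra mul E H Fe)
           (hfaith : L_faithful mul E H Fe).

Local Notation mDl := (prodDl hbil).
Local Notation mDr := (prodDr hbil).
Local Notation mZl := (prodZl hbil).
Local Notation mZr := (prodZr hbil).
Local Notation m0l := (prod0l hbil).
Local Notation m0r := (prod0r hbil).
Local Notation mNl := (prodNl hbil).
Local Notation skew := (prod_skew hbil hanti).

Lemma inL_E : inL E H Fe E.
Proof. by exists 1, 0, 0; rewrite scale1r !scale0r !addr0. Qed.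

Lemma inL_H : inL E H Fe H.
Proof. by exists 0, 1, 0; rewrite scale1r !scale0r add0r addr0. Qed.

Lemma inL_F : inL E H Fe Fe.
Proof. by exists 0, 0, 1; rewrite scale1r !scale0r !add0r. Qed.

Lemma mul_EH : mul E H = E. Proof. by case: hsl2. Qed.
Lemma mul_FH : mul Fe H = - Fe. Proof. by case: hsl2. Qed.
Lemma mul_EF : mul E Fe = (2%:R)^-1 *: H. Proof. by case: hsl2. Qed.

Lemma mul_HF : mul H Fe = Fe.
Proof. by rewrite skew mul_FH opprK. Qed.

Lemma mul_FE : mul Fe E = - ((2%:R)^-1 *: H).
Proof. by rewrite skew mul_EF. Qed.

Lemma scaler2_half (v : M) : 2%:R *: ((2%:R)^-1 *: v) = v.
Proof. by rewrite scalerA mulfV // scale1r. Qed.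

Section VectorOfWeightOne.
Variable x : M.
Hypothesis hx : inV mul E H Fe x.

Lemma V_mul_H : mul x H = x. Proof. exact: hx.2. Qed.

Lemma H_mul_V : mul H x = - x.
Proof. by rewrite skew V_mul_H. Qed.

Lemma V_J_EF : mul (mul x E) Fe = mul (mul x Fe) E - x.
Proof.
have := hx.1 E Fe inL_E inL_F; rewrite /trip mul_EF mZr scaler2_half V_mul_H.
by move/eqP; rewrite addrAC subr_eq0 => /eqP <-; rewrite addrK.
Qed.

(* xF = 0: the J-relations give (xF)H = 3 xF and (xE)F = (xF)E - x, and the
   Malcev identity for (x, E, F, F) then forces 3 xF = 0. *)
Lemma V_mul_F : mul x Fe = 0.
Proof.
set a := mul x Fe.
have JHF : mul a H = a + 2%:R *: a.
  have := hx.1 H Fe inL_H inL_F; rewrite /trip V_mul_H mul_HF -/a.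
  by move/eqP; rewrite addrAC subr_eq0 => /eqP.
have := hmal x E Fe Fe; rewrite -/a mul_EF V_J_EF -/a hanti !m0l addr0.
rewrite !mZl mZr mul_HF mDl (skew Fe x) -/a !mNl JHF -/a.
set b := mul (mul a E) Fe; rewrite addrAC (addrC b) addrK.
move/(congr1 (fun v => 2%:R *: v)); rewrite scaler2_half scalerDr scalerN scaler2_half.
rewrite !scaler_nat -mulrS -opprD -mulrSr => /eqP; rewrite -subr_eq0 opprK -mulrnDr.
have h6 : ((3 + 3)%N%:R : F) != 0 by rewrite -[(3 + 3)%N]/(2 * 3)%N natrM mulf_neq0.
by rewrite -scaler_nat scaler_eq0 (negbTE h6) => /eqP.
Qed.

Lemma V_mulE_F : mul (mul x E) Fe = - x.
Proof. by rewrite V_J_EF V_mul_F m0l sub0r. Qed.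

End VectorOfWeightOne.

(* A centroidal map vanishing at F vanishes on L (which is generated by E
   and F), hence on all of M since L acts faithfully. *)
Lemma centroidal_vanishing f : centroidal mul f -> f Fe = 0 -> forall m, f m = 0.
Proof.
move=> hf fF0.
have fH0 : f H = 0.
  rewrite -[H]scaler2_half -mul_EF scaler_nat (centroidal_natmul hf) hf.2 fF0.
  by rewrite m0r mul0rn.
have fE0 : f E = 0 by rewrite -mul_EH hf.2 fH0 m0r.
move=> m; apply/eqP/negPn/negP => /eqP /hfaith [a [[c1 [c2 [c3 ->]]]]].
rewrite !mDr !mZr -!(centroidal_mulr hbil hanti hf) !hf.2 fF0 fH0 fE0.
by rewrite !m0r !scaler0 !addr0.
Qed.

End SL2Module.

Section Bracket.
Variables (F : fieldType) (M : lmodType F) (mul : M -> M -> M) (E H Fe : M).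
Variable br : M -> M -> M -> M.
Hypotheses (hS : setting mul E H Fe) (hbr : bracket_ok mul E H Fe br).

Let h2 : (2%:R : F) != 0. Proof. by case: hS. Qed.
Let h3 : (3%:R : F) != 0. Proof. by case: hS. Qed.
Let hH : malcevH mul. Proof. by case: hS. Qed.
Let hbil : mul_bilinear mul. Proof. by case: hH. Qed.
Let hanti : anticommutative mul. Proof. by case: hH. Qed.
Let hmal : malcev_identity mul. Proof. by case: hH. Qed.
Let hsl2 : sl2_subalgebra mul E H Fe. Proof. by case: hS. Qed.
Let hfaith : L_faithful mul E H Fe. Proof. by case: hS. Qed.

Local Notation mZl := (prodZl hbil).
Local Notation mNl := (prodNl hbil).
Local Notation m0l := (prod0l hbil).
Local Notation skew := (prod_skew hbil hanti).
Local Notation inV := (inV mul E H Fe).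
Local Notation H_mul_V := (H_mul_V hbil hanti).
Local Notation V_mul_F := (V_mul_F h2 h3 hbil hanti hmal hsl2).
Local Notation V_mulE_F := (V_mulE_F h2 h3 hbil hanti hmal hsl2).

Lemma bracket_centroidal u v : inV u -> inV v -> centroidal mul (br u v).
Proof.
by move=> hu hv; case: hbr => hU _ _ _ _; exact: inU_centroidal hH h2 _ _ _ _ (hU u v hu hv).
Qed.

Lemma bracket_skew u v x : inV u -> inV v -> br u v x = - br v u x.
Proof. by move=> hu hv; case: hbr => _ _ _ /(_ u v hu hv). Qed.

Lemma bracket_uv u v : inV u -> inV v -> mul u v = br u v Fe.
Proof. by move=> hu hv; case: hbr => _ _ _ _ /(_ u v hu hv) []. Qed.

Lemma bracket_uEv u v : inV u -> inV v -> mul (mul u E) v = (2%:R)^-1 *: br u v H.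
Proof. by move=> hu hv; case: hbr => _ _ _ _ /(_ u v hu hv) []. Qed.

Lemma bracket_mulr u v x s : inV u -> inV v -> br u v (mul x s) = mul (br u v x) s.
Proof. by move=> hu hv; apply: (centroidal_mulr hbil hanti (bracket_centroidal hu hv)). Qed.

Section Triple.
Variables u v w : M.
Hypotheses (hu : inV u) (hv : inV v) (hw : inV w).

(* The five terms of the Malcev identity for (u, w, v, E), expressed through
   the bracket, using F(wE) = w, Fv = 0, FE = -H/2 and Hw = -w. *)
Lemma malcev_term0 : mul (mul u v) (mul w E) = br u v w.
Proof.
rewrite (bracket_uv hu hv) -(bracket_mulr _ _ hu hv) (skew Fe) (V_mulE_F hw).
by rewrite opprK.
Qed.

Lemma malcev_term1 : mul (mul (mul u w) v) E = 0.
Proof.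
rewrite (bracket_uv hu hw) -(bracket_mulr _ _ hu hw) (skew Fe) (V_mul_F hv) oppr0.
by rewrite (centroidal0 (bracket_centroidal hu hw)) m0l.
Qed.

Lemma malcev_term2 : mul (mul (mul w v) E) u = (2%:R)^-1 *: br w v u.
Proof.
rewrite (bracket_uv hw hv) -!(bracket_mulr _ _ hw hv) (mul_FE hbil hanti hsl2) mNl mZl.
rewrite (H_mul_V hu) scalerN opprK.
by rewrite (centroidal_scale_inv (bracket_centroidal hw hv)).
Qed.

Lemma malcev_term3 : mul (mul (mul v E) u) w = - ((2%:R)^-1 *: br v u w).
Proof.
rewrite (bracket_uEv hv hu) mZl -(bracket_mulr _ _ hv hu) (H_mul_V hw).
by rewrite (centroidalN (bracket_centroidal hv hu)) scalerN.
Qed.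

Lemma malcev_term4 : mul (mul (mul E u) w) v = (2%:R)^-1 *: br u w v.
Proof.
rewrite (skew E) mNl (bracket_uEv hu hw) mNl mZl -(bracket_mulr _ _ hu hw).
by rewrite (H_mul_V hv) (centroidalN (bracket_centroidal hu hw)) scalerN opprK.
Qed.

Lemma bracket_cyclic : br u v w + br v w u + br w u v = 0.
Proof.
have := hmal u w v E.
rewrite malcev_term0 malcev_term1 malcev_term2 malcev_term3 malcev_term4 add0r.
rewrite (bracket_skew u hw hv) (bracket_skew w hv hu) (bracket_skew v hu hw).
set S := br u v w; set A := br v w u; set B := br w u v.
move/(congr1 (fun x => 2%:R *: x)); rewrite !scalerDr !scalerN !(scaler2_half h2) opprK.
rewrite scaler_nat mulr2n => e.
have -> : S = - A - B by apply: (addrI S); rewrite e addrAC addrC.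
by rewrite addrAC subrK addNr.
Qed.

End Triple.

(* Second identity: <u,v><w,t> + <v,w><u,t> + <w,u><v,t> = 0.  The left side
   is a centroidal map sending F to (w<u,v> + u<v,w> + v<w,u>)t = 0. *)
Lemma bracket_product_cyclic u v w t x :
  inV u -> inV v -> inV w -> inV t ->
  br u v (br w t x) + br v w (br u t x) + br w u (br v t x) = 0.
Proof.
move=> hu hv hw ht.
have hg : centroidal mul (fun y => br u v (br w t y) + br v w (br u t y) + br w u (br v t y)).
  have cc a b c d (ha : inV a) (hb : inV b) (hc : inV c) (hd : inV d) :
      centroidal mul (fun y => br a b (br c d y)).
    exact: centroidal_comp (bracket_centroidal ha hb) (bracket_centroidal hc hd).
  by apply: centroidal_add => //; [apply: centroidal_add => // |]; apply: cc.
apply: (centroidal_vanishing h2 hbil hanti hsl2 hfaith hg) => /=.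
rewrite -(bracket_uv hw ht) -(bracket_uv hu ht) -(bracket_uv hv ht).
rewrite (bracket_mulr _ _ hu hv) (bracket_mulr _ _ hv hw) (bracket_mulr _ _ hw hu).
by rewrite -!(prodDl hbil) bracket_cyclic // m0l.
Qed.

End Bracket.

Theorem mainTheorem7 (F : fieldType) (M : lmodType F) (mul : M -> M -> M)
  (E H Fe : M) (br : M -> M -> M -> M)
  (hS : setting mul E H Fe) (hbr : bracket_ok mul E H Fe br) :
  forall u v w t : M,
    inV mul E H Fe u -> inV mul E H Fe v -> inV mul E H Fe w -> inV mul E H Fe t ->
    br u v w + br v w u + br w u v = 0 /\
    (forall x : M,
       br u v (br w t x) + br v w (br u t x) + br w u (br v t x) = 0).
Proof.
move=> u v w t hu hv hw ht; split; first exact: bracket_cyclic hS hbr _ _ _ hu hv hw.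
by move=> x; exact: bracket_product_cyclic hS hbr _ _ _ _ x hu hv hw ht.
Qed.
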